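(* Let $n\ge2$ and let $\mathsf r=[r_1,\dots,r_{2n-2}]$ be a tree-like factorization of $\lambda_n$, written as $r_\ell=(\!(a_{\ell-1},a_\ell)\!)$ for integers $a_0<a_1<\dots<a_{2n-2}$. Then $a_0\equiv a_{2n-2}\equiv 0\pmod n$.
   Context: The affine symmetric group $\widetilde S_n$ is the group, under composition, of bijections $w:\mathbb Z\to\mathbb Z$ with $w(i+n)=w(i)+n$ and $\sum_{i=1}^n w(i)=\binom{n+1}{2}$. For $i\not\equiv j\pmod n$, $(\!(i,j)\!)$ is the affine reflection interchanging $i+kn$ and $j+kn$ for all $k\in\mathbb Z$; $(\!(i,j)\!)=(\!(j,i)\!)=(\!(i+kn,j+kn)\!)$. Let $\lambda_n$ be the element with $\lambda_n(k)=k+n$ for $k\not\equiv 0\pmod n$ and $\lambda_n(k)=k-n(n-1)$ for $k\equiv0\pmod n$; its reflection length (minimal number of reflections with product $\lambda_n$) is $2n-2$. $\textsc{fact}(\lambda_n)$ is the set of sequences $[r_1,\dots,r_{2n-2}]$ of reflections with $r_1r_2\cdots r_{2n-2}=\lambda_n$. Such a sequence is tree-like if one can write $r_k=(\!(a_{k-1},b_k)\!)$ with integers $a_{k-1}<b_k$ ($1\le k\le 2n-2$) such that $a_k\equiv b_k\pmod n$ ($1\le k\le 2n-3$); equivalently, after shifting representatives by multiples of $n$, there are integers $a_0<a_1<\dots<a_{2n-2}$ with $r_\ell=(\!(a_{\ell-1},a_\ell)\!)$ for all $\ell$. *)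

From Stdlib Require Import ZArith Lia.
Open Scope Z_scope.

Definition congr (n x y : Z) : Prop := x mod n = y mod n.

(* The affine reflection ((i,j)) of Z (for i not congruent to j mod n):
   interchanges i+kn and j+kn for all k, fixes every other integer. *)
Definition refl (n i j : Z) (x : Z) : Z :=
  if Z.eqb (x mod n) (i mod n) then x + (j - i)
  else if Z.eqb (x mod n) (j mod n) then x - (j - i)
  else x.

Definition is_reflection (n : Z) (f : Z -> Z) : Prop :=
  exists i j : Z, ~ congr n i j /\ forall x, f x = refl n i j x.

Definition lambda (n : Z) (k : Z) : Z :=
  if Z.eqb (k mod n) 0 then k - n * (n - 1) else k + n.

(* prodr r m = r 1 o r 2 o ... o r m (composition; prodr r 0 = id) *)
Fixpoint prodr (r : nat -> Z -> Z) (m : nat) : Z -> Z :=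
  match m with
  | O => fun x => x
  | S k => fun x => prodr r k (r (S k) x)
  end.

Definition is_fact (n : nat) (r : nat -> Z -> Z) : Prop :=
  (forall l : nat, (1 <= l <= 2 * n - 2)%nat -> is_reflection (Z.of_nat n) (r l)) /\
  (forall x : Z, prodr r (2 * n - 2) x = lambda (Z.of_nat n) x).

Definition tree_like_witness (n : nat) (r : nat -> Z -> Z) (a : nat -> Z) : Prop :=
  (forall l : nat, (1 <= l <= 2 * n - 2)%nat -> a (l - 1)%nat < a l) /\
  (forall l : nat, (1 <= l <= 2 * n - 2)%nat ->
     forall x : Z, r l x = refl (Z.of_nat n) (a (l - 1)%nat) (a l) x).

Definition tree_like (n : nat) (r : nat -> Z -> Z) : Prop :=
  exists a : nat -> Z, tree_like_witness n r a.

(* Each reflection r_l = ((a_(l-1), a_l)) sends a_l to a_(l-1), so the product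
   lambda_n sends a_(2n-2) to a_0 < a_(2n-2).  But lambda_n moves every integer
   up by n except the multiples of n, which it moves down by n(n-1); hence
   a_(2n-2) is a multiple of n, and so is a_0 = a_(2n-2) - n(n-1). *)
From Stdlib Require Import ZArith Lia.
Open Scope Z_scope.

Lemma refl_mod (n i j x : Z) : congr n i j -> refl n i j x mod n = x mod n.
Proof.
  unfold congr, refl; intros Hij.
  assert (Hk : j - i = (j / n - i / n) * n).
  { pose proof (Z_div_mod_eq_full i n); pose proof (Z_div_mod_eq_full j n); lia. }
  destruct (Z.eqb _ _); [|destruct (Z.eqb _ _)]; try reflexivity.
  - rewrite Hk; apply Z_mod_plus_full.
  - replace (x - (j - i)) with (x + - (j / n - i / n) * n) by lia.
    apply Z_mod_plus_full.
Qed.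

Lemma refl_l (n i j : Z) : refl n i j i = j.
Proof. unfold refl; rewrite Z.eqb_refl; lia. Qed.

Lemma refl_r (n i j : Z) : ~ congr n i j -> refl n i j j = i.
Proof.
  unfold congr, refl; intros Hij.
  destruct (Z.eqb_spec (j mod n) (i mod n)) as [E|_]; [congruence|].
  rewrite Z.eqb_refl; lia.
Qed.

(* If [i = j (mod n)] then [refl n i j] preserves residues, whereas a genuine
   reflection [refl n i' j'] moves [i'] to the different residue class of [j']. *)
Lemma is_reflection_refl_ncongr (n i j : Z) (f : Z -> Z) :
  is_reflection n f -> (forall x, f x = refl n i j x) -> ~ congr n i j.
Proof.
  intros [i' [j' [Hij' Hf']]] Hf Hij; apply Hij'; unfold congr.
  rewrite <- (refl_l n i' j'), <- Hf', Hf.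
  symmetry; apply refl_mod, Hij.
Qed.

Lemma prodr_chain (r : nat -> Z -> Z) (a : nat -> Z) (m : nat) :
  (forall l, (1 <= l <= m)%nat -> r l (a l) = a (l - 1)%nat) ->
  prodr r m (a m) = a 0%nat.
Proof.
  induction m as [|m IH]; intros Hstep; simpl; [reflexivity|].
  rewrite Hstep by lia; rewrite Nat.sub_succ, Nat.sub_0_r.
  apply IH; intros l Hl; apply Hstep; lia.
Qed.

Lemma chain_lt (a : nat -> Z) (m : nat) :
  (forall l, (1 <= l <= m)%nat -> a (l - 1)%nat < a l) ->
  (1 <= m)%nat -> a 0%nat < a m.
Proof.
  induction m as [|m IH]; intros Hlt Hm; [lia|].
  pose proof (Hlt (S m) ltac:(lia)) as Hlast; simpl in Hlast.
  rewrite Nat.sub_0_r in Hlast.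
  destruct m as [|m]; [exact Hlast|].
  enough (a 0%nat < a (S m)) by lia.
  apply IH; [intros l Hl; apply Hlt | ]; lia.
Qed.

Lemma lambda_lt_mod0 (n x : Z) :
  0 < n -> lambda n x < x -> x mod n = 0 /\ lambda n x mod n = 0.
Proof.
  unfold lambda; intros Hn Hlt.
  destruct (Z.eqb_spec (x mod n) 0) as [E|_]; [|lia].
  split; [exact E|].
  replace (x - n * (n - 1)) with (x + - (n - 1) * n) by lia.
  rewrite Z_mod_plus_full; exact E.
Qed.

Lemma tree_like_step (n : nat) (r : nat -> Z -> Z) (a : nat -> Z) (l : nat) :
  is_fact n r -> tree_like_witness n r a -> (1 <= l <= 2 * n - 2)%nat ->
  r l (a l) = a (l - 1)%nat.
Proof.
  intros [Hrefl _] [_ Hr] Hl.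
  rewrite Hr by exact Hl.
  apply refl_r, (is_reflection_refl_ncongr _ _ _ (r l)); auto.
Qed.

Theorem corollary3p5 (n : nat) (r : nat -> Z -> Z) (a : nat -> Z) :
  (2 <= n)%nat ->
  is_fact n r ->
  tree_like_witness n r a ->
  congr (Z.of_nat n) (a 0%nat) 0 /\ congr (Z.of_nat n) (a (2 * n - 2)%nat) 0.
Proof.
  intros Hn Hfact Htree.
  assert (Hprod : lambda (Z.of_nat n) (a (2 * n - 2)%nat) = a 0%nat).
  { rewrite <- (proj2 Hfact).
    apply prodr_chain; intros l Hl; exact (tree_like_step n r a l Hfact Htree Hl). }
  assert (Hlt : a 0%nat < a (2 * n - 2)%nat).
  { apply chain_lt; [apply Htree | lia]. }
  rewrite <- Hprod in Hlt |- *.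
  destruct (lambda_lt_mod0 (Z.of_nat n) _ ltac:(lia) Hlt) as [Htop Hbot].
  unfold congr; rewrite Zmod_0_l; auto.
Qed.
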